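(* For all integers $n$ and $\alpha$ with $n\le\alpha\le 2^n$, there exists a minimal $n$-state nondeterministic finite automaton accepting a star language whose equivalent minimal deterministic finite automaton has exactly $\alpha$ states. The same statement holds with ''star language'' replaced by ''comet language'', and also with ''star language'' replaced by ''two-sided comet language''.
   Context: NFAs have a single initial state and a transition function $\delta:Q\times\Sigma\to 2^Q$ that may map to the empty set (no sink state is needed or counted); DFAs are complete, so a sink state is counted. A minimal $n$-state NFA is an NFA with $n$ states such that no NFA with fewer states accepts the same language. A language $L\subseteq\Sigma^*$ is a star language if $L=H^*$ for some regular language $H\subseteq\Sigma^*$. It is a comet language if $L=G^*H$ for regular languages $G,H\subseteq\Sigma^*$ with $G\neq\{\lambda\}$ and $G\neq\emptyset$ ($\lambda$ the empty word). It is a two-sided comet language if $L=EG^*H$ for regular languages $E,G,H\subseteq\Sigma^*$ with $G\neq\{\lambda\}$ and $G\neq\emptyset$. *)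

From mathcomp Require Import all_boot.
Set Implicit Arguments. Unset Strict Implicit. Unset Printing Implicit Defensive.

Section Automata.
Variable Sigma : finType.

Definition lang := seq Sigma -> Prop.

Definition lang_eq (L1 L2 : lang) : Prop := forall w, L1 w <-> L2 w.

Definition lconcat (L1 L2 : lang) : lang :=
  fun w => exists u v, w = u ++ v /\ L1 u /\ L2 v.

Definition lstar (L : lang) : lang :=
  fun w => exists ws : seq (seq Sigma), (forall u, u \in ws -> L u) /\ w = flatten ws.

(* NFA with states 'I_n, a single initial state, delta : Q x Sigma -> 2^Q
   (possibly empty; no sink state). *)
Record nfa (n : nat) := NFA {
  n_init : 'I_n;
  n_trans : 'I_n -> Sigma -> {set 'I_n};
  n_final : {set 'I_n} }.

Definition nfa_run n (A : nfa n) (S : {set 'I_n}) (w : seq Sigma) : {set 'I_n} :=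
  foldl (fun (S : {set 'I_n}) (a : Sigma) => \bigcup_(q in S) n_trans A q a) S w.

Definition nfa_lang n (A : nfa n) : lang :=
  fun w => nfa_run A [set n_init A] w :&: n_final A != set0.

(* Complete DFA with states 'I_m (a sink state, if any, is counted). *)
Record dfa (m : nat) := DFA {
  d_init : 'I_m;
  d_trans : 'I_m -> Sigma -> 'I_m;
  d_final : {set 'I_m} }.

Definition dfa_lang m (D : dfa m) : lang :=
  fun w => foldl (d_trans D) (d_init D) w \in d_final D.

Definition regular (L : lang) : Prop :=
  exists m (A : nfa m), lang_eq (nfa_lang A) L.

Definition minimal_nfa n (A : nfa n) : Prop :=
  forall k (B : nfa k), k < n -> ~ lang_eq (nfa_lang B) (nfa_lang A).

Definition min_dfa_size (L : lang) (alpha : nat) : Prop :=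
  (exists D : dfa alpha, lang_eq (dfa_lang D) L) /\
  (forall k (D : dfa k), k < alpha -> ~ lang_eq (dfa_lang D) L).

Definition lang_eps : lang := fun w => w = [::].
Definition lang_empty : lang := fun _ => False.

Definition star_language (L : lang) : Prop :=
  exists H : lang, regular H /\ lang_eq L (lstar H).

Definition comet_language (L : lang) : Prop :=
  exists G H : lang, regular G /\ regular H /\
    ~ lang_eq G lang_eps /\ ~ lang_eq G lang_empty /\
    lang_eq L (lconcat (lstar G) H).

Definition two_sided_comet_language (L : lang) : Prop :=
  exists E G H : lang, regular E /\ regular G /\ regular H /\
    ~ lang_eq G lang_eps /\ ~ lang_eq G lang_empty /\
    lang_eq L (lconcat E (lconcat (lstar G) H)).

End Automata.

From mathcomp Require Import all_boot zify.
Set Implicit Arguments. Unset Strict Implicit. Unset Printing Implicit Defensive.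

(* If the initial state of an NFA is its only final state, its language is
   closed under concatenation and contains the empty word, hence L = L^* =
   L^* L = L L^* L; so it suffices to build, for each n <= alpha <= 2^n, a
   minimal n-state NFA of this shape whose subset automaton has alpha states.
   For alpha = n a unary cycle of length n works.  For alpha > n choose a
   family F of nonempty sets of states containing all singletons with
   |F| = alpha - 1, and letters T (for T in F) jumping from any nonempty set
   to T, and p (for each state p) leading back to the initial state exactly
   when p is present: the reachable subsets are F and the empty set, and the
   letters p separate them.  Minimality of the NFA comes from a fooling set
   of size n, minimality of the DFA from n or alpha pairwise distinguishable
   words. *)

Section NfaRuns.
Variables (Sigma : finType) (n : nat) (A : nfa Sigma n).

Definition nfa_step (S : {set 'I_n}) (a : Sigma) : {set 'I_n} :=
  \bigcup_(q in S) n_trans A q a.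

Definition nfa_accepts (S : {set 'I_n}) (w : seq Sigma) : bool :=
  nfa_run A S w :&: n_final A != set0.

Lemma nfa_run_cons S a w : nfa_run A S (a :: w) = nfa_run A (nfa_step S a) w.
Proof. by []. Qed.

Lemma nfa_run_cat S u v : nfa_run A S (u ++ v) = nfa_run A (nfa_run A S u) v.
Proof. by rewrite /nfa_run foldl_cat. Qed.

Lemma nfa_accepts_cat S u v :
  nfa_accepts S (u ++ v) = nfa_accepts (nfa_run A S u) v.
Proof. by rewrite /nfa_accepts nfa_run_cat. Qed.

Lemma nfa_step_mono (S T : {set 'I_n}) a :
  S \subset T -> nfa_step S a \subset nfa_step T a.
Proof.
move=> /subsetP sST; apply/subsetP => x /bigcupP [q qS xq].
by apply/bigcupP; exists q => //; apply: sST.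
Qed.

Lemma nfa_run_mono w (S T : {set 'I_n}) : S \subset T -> nfa_run A S w \subset nfa_run A T w.
Proof.
by elim: w S T => [|a w IHw] S T // sST; rewrite !nfa_run_cons; apply/IHw/nfa_step_mono.
Qed.

Lemma nfa_accepts_mono (S T : {set 'I_n}) w :
  S \subset T -> nfa_accepts S w -> nfa_accepts T w.
Proof.
move=> sST /set0Pn [x /setIP [xS xF]]; apply/set0Pn; exists x; rewrite inE xF andbT.
exact: subsetP (nfa_run_mono w sST) x xS.
Qed.

Lemma nfa_run_from_state w (S : {set 'I_n}) p :
  p \in nfa_run A S w -> exists2 q, q \in S & p \in nfa_run A [set q] w.
Proof.
elim: w S => [|a w IHw] S; first by exists p; rewrite ?in_set1.
rewrite nfa_run_cons => /IHw [r /bigcupP [q qS rq] pr].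
exists q => //; apply: subsetP pr; apply: nfa_run_mono.
by rewrite sub1set; apply/bigcupP; exists q; rewrite ?in_set1.
Qed.

Lemma nfa_accepts_catP (S : {set 'I_n}) u v :
  nfa_accepts S (u ++ v) -> exists2 q, q \in nfa_run A S u & nfa_accepts [set q] v.
Proof.
rewrite nfa_accepts_cat => /set0Pn [p /setIP [/nfa_run_from_state [q qS pq] pF]].
by exists q => //; apply/set0Pn; exists p; rewrite inE pq.
Qed.

Lemma nfa_langE w : nfa_lang A w = nfa_accepts [set n_init A] w.
Proof. by []. Qed.

Lemma nfa_lang_regular : regular (nfa_lang A).
Proof. by exists n, A. Qed.

End NfaRuns.

Section SizeBounds.
Variable Sigma : finType.

(* A word of x i ++ y i is accepted through some state reached on x i; two
   indices reaching the same state could swap their suffixes. *)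
Lemma fooling_set_minimal_nfa n (A : nfa Sigma n) (x y : 'I_n -> seq Sigma) :
  (forall i, nfa_lang A (x i ++ y i)) ->
  (forall i j, nfa_lang A (x i ++ y j) -> nfa_lang A (x j ++ y i) -> i = j) ->
  minimal_nfa A.
Proof.
move=> xyA fool k B lt_kn eqBA.
pose good i q := (q \in nfa_run B [set n_init B] (x i)) && nfa_accepts B [set q] (y i).
have goodP i : exists q, good i q.
  have /eqBA/nfa_accepts_catP [q q1 q2] := xyA i.
  by exists q; apply/andP.
pose mid i := xchoose (goodP i).
have midP i : good i (mid i) := xchooseP (goodP i).
have swap i j : mid i = mid j -> nfa_lang A (x i ++ y j).
  move=> eq_mid; apply/eqBA; rewrite nfa_langE nfa_accepts_cat.
  have /andP [xi _] := midP i; have /andP [_ yj] := midP j.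
  by apply: nfa_accepts_mono yj; rewrite sub1set -eq_mid.
have inj_mid : injective mid by move=> i j eq_mid; apply: fool; apply: swap.
by have := @leq_card _ _ mid inj_mid; rewrite !card_ord; lia.
Qed.

Lemma distinguishable_dfa_lower_bound (L : lang Sigma) alpha
    (w : 'I_alpha -> seq Sigma) :
  (forall i j, i != j -> exists z, ~ (L (w i ++ z) <-> L (w j ++ z))) ->
  forall k (D : dfa Sigma k), k < alpha -> ~ lang_eq (dfa_lang D) L.
Proof.
move=> dist k D lt_k_alpha eqDL.
pose f i := foldl (d_trans D) (d_init D) (w i).
have /injectivePn [i [j neq_ij fij]] : ~~ injectiveb f.
  apply/injectiveP => inj_f.
  by have := @leq_card _ _ f inj_f; rewrite !card_ord; lia.
have [z []] := dist i j neq_ij.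
by rewrite -!eqDL /dfa_lang !foldl_cat -/(f i) -/(f j) fij.
Qed.

Lemma subset_automaton_min_dfa_size n (A : nfa Sigma n) (R : {set {set 'I_n}})
    (reach : {set 'I_n} -> seq Sigma) (R_init : [set n_init A] \in R) :
  (forall S, S \in R -> nfa_run A [set n_init A] (reach S) = S) ->
  (forall S a, S \in R -> nfa_step A S a \in R) ->
  (forall S T, S \in R -> T \in R -> S != T ->
     exists w, nfa_accepts A S w != nfa_accepts A T w) ->
  min_dfa_size (nfa_lang A) #|R|.
Proof.
move=> reachP R_step R_dist; split.
  pose D := DFA (enum_rank_in R_init [set n_init A])
     (fun i a => enum_rank_in R_init (nfa_step A (enum_val i) a))
     [set i | enum_val i :&: n_final A != set0].
  have runD w i : enum_val (foldl (d_trans D) i w) = nfa_run A (enum_val i) w.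
    elim: w i => [|a w IHw] i //=.
    by rewrite IHw enum_rankK_in //; apply/R_step/enum_valP.
  by exists D => w; rewrite /dfa_lang inE runD /= enum_rankK_in.
apply: (@distinguishable_dfa_lower_bound _ _ (fun i => reach (enum_val i))) => i j ij.
have neq_ij : enum_val i != enum_val j by apply: contra ij => /eqP/enum_val_inj ->.
have [z /negP dist_z] := R_dist _ _ (enum_valP i) (enum_valP j) neq_ij.
exists z; rewrite !nfa_langE !nfa_accepts_cat !reachP ?enum_valP // => eq_acc.
by apply: dist_z; apply/eqP; apply/idP/idP => /eq_acc.
Qed.

End SizeBounds.

Section LoopAtInitialState.
Variables (Sigma : finType) (n : nat) (A : nfa Sigma n).
Hypothesis final_init : n_final A = [set n_init A].

Let L := nfa_lang A.

Lemma loop_lang_nil : L [::].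
Proof.
rewrite /L nfa_langE /nfa_accepts final_init setIid.
by apply/set0Pn; exists (n_init A); rewrite inE.
Qed.

Lemma loop_lang_cat u v : L u -> L v -> L (u ++ v).
Proof.
rewrite /L !nfa_langE nfa_accepts_cat {1}/nfa_accepts final_init.
move=> /set0Pn [p /setIP [p_u /set1P p_init]]; apply: nfa_accepts_mono.
by rewrite sub1set -{1}p_init.
Qed.

Lemma lstar_loop_lang w : lstar L w <-> L w.
Proof.
split=> [[ws [Lws ->]] | Lw]; last first.
  by exists [:: w]; rewrite /= cats0; split=> // u /[!inE] /eqP ->.
elim: ws Lws => [|u ws IHws] Lws /=; first exact: loop_lang_nil.
apply: loop_lang_cat; first by apply: Lws; rewrite mem_head.
by apply: IHws => v v_ws; apply/Lws/mem_behead.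
Qed.

Lemma lconcat_lstar_loop_lang w : lconcat (lstar L) L w <-> L w.
Proof.
split=> [[u [v [-> [/lstar_loop_lang Lu Lv]]]] | Lw]; first exact: loop_lang_cat.
by exists [::], w; do !split=> //; apply/lstar_loop_lang/loop_lang_nil.
Qed.

Lemma loop_lang_star_comet (w0 : seq Sigma) : w0 != [::] -> L w0 ->
  [/\ star_language L, comet_language L & two_sided_comet_language L].
Proof.
move=> w0_nil L_w0.
have L_eps : ~ lang_eq L (@lang_eps Sigma).
  by move=> /(_ w0) [/(_ L_w0) w0_eps]; rewrite w0_eps in w0_nil.
have L_empty : ~ lang_eq L (@lang_empty Sigma) by move=> /(_ [::]) [/(_ loop_lang_nil)].
have regL : regular L := nfa_lang_regular A.
split.
- by exists L; split=> // w; exact: iff_sym (lstar_loop_lang w).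
- by exists L, L; do 4 split=> //; move=> w; exact: iff_sym (lconcat_lstar_loop_lang w).
exists L, L, L; do 5 split=> //; move=> w.
split=> [Lw | [u [v [-> [Lu /lconcat_lstar_loop_lang Lv]]]]]; last exact: loop_lang_cat.
by exists [::], w; do !split; [exact: loop_lang_nil | apply/lconcat_lstar_loop_lang].
Qed.

End LoopAtInitialState.

Lemma exists_card_between (T : finType) (A B : {set T}) k :
  A \subset B -> #|A| <= k <= #|B| ->
  exists C : {set T}, [/\ A \subset C, C \subset B & #|C| = k].
Proof.
move=> sAB /andP [leAk lekB].
have [d kE] : exists d, k = #|A| + d by exists (k - #|A|); lia.
subst k; clear leAk.
elim: d A sAB lekB => [|d IHd] A sAB leB; first by exists A; rewrite addn0.
have /properP [_ [x xB xA]] : A \proper B by rewrite properEcard sAB; lia.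
have [||C [sxAC sCB cardC]] := IHd (x |: A).
- by rewrite subUset sub1set xB.
- by rewrite cardsU1 xA /=; lia.
exists C; split=> //; last by rewrite cardC cardsU1 xA /=; lia.
exact: subset_trans (subsetUr _ _) sxAC.
Qed.

Section SubsetAutomaton.
Variables (m : nat) (F : {set {set 'I_m.+1}}).
Hypotheses (F_set1 : forall i, [set i] \in F) (F_set0 : set0 \notin F).

Definition subset_nfa : nfa ({set 'I_m.+1} + 'I_m.+1)%type m.+1 :=
  NFA ord0 (fun q a => match a with
                       | inl T => if T \in F then T else set0
                       | inr p => if q == p then [set ord0] else set0
                       end) [set ord0].

Let init_neq0 : [set ord0] != set0 :> {set 'I_m.+1}.
Proof. by apply/set0Pn; exists ord0; rewrite inE. Qed.

Lemma subset_step_jump S T :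
  nfa_step subset_nfa S (inl T) = if (S != set0) && (T \in F) then T else set0.
Proof.
have [->|/set0Pn [q qS]] /= := eqVneq S set0; first by rewrite /nfa_step big_set0.
apply/setP => x; apply/bigcupP/idP => [[r _ //] | xT].
by exists q => //=; case: ifP xT => // _; rewrite inE.
Qed.

Lemma subset_step_test S p :
  nfa_step subset_nfa S (inr p) = if p \in S then [set ord0] else set0.
Proof.
apply/setP => x; apply/bigcupP/idP => [[q qS] /= | ].
  by case: eqP => [<- | _]; rewrite ?qS // inE.
by case: ifP => [pS x0 | _]; [exists p; rewrite // /subset_nfa /= eqxx | rewrite inE].
Qed.

Lemma subset_run_jump T :
  nfa_run subset_nfa [set ord0] [:: inl T] = if T \in F then T else set0.
Proof. by rewrite nfa_run_cons subset_step_jump init_neq0. Qed.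

Lemma subset_accepts_test S p : nfa_accepts subset_nfa S [:: inr p] = (p \in S).
Proof.
rewrite /nfa_accepts nfa_run_cons subset_step_test.
by case: (p \in S) => /=; rewrite ?setIid ?set0I ?init_neq0 ?eqxx.
Qed.

Lemma subset_nfa_minimal : minimal_nfa subset_nfa.
Proof.
apply: (@fooling_set_minimal_nfa _ _ _ (fun i => [:: inl [set i]]) (fun i => [:: inr i])).
  move=> i; rewrite nfa_langE nfa_accepts_cat subset_run_jump F_set1.
  by rewrite subset_accepts_test inE.
move=> i j; rewrite !nfa_langE !nfa_accepts_cat !subset_run_jump !F_set1.
by rewrite subset_accepts_test inE => /eqP.
Qed.

Lemma subset_nfa_min_dfa_size : min_dfa_size (nfa_lang subset_nfa) #|set0 |: F|.
Proof.
apply: (@subset_automaton_min_dfa_size _ _ _ _ (fun S => [:: inl S])).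
- by rewrite !inE F_set1 orbT.
- by move=> S; rewrite subset_run_jump !inE => /orP [/eqP -> | ->]; rewrite ?(negPf F_set0).
- move=> S [T | p] _; rewrite ?subset_step_jump ?subset_step_test !inE.
    by case: ifP => [/andP [_ ->] | _]; rewrite ?eqxx ?orbT.
  by case: ifP => _; rewrite ?F_set1 ?eqxx ?orbT.
move=> S T _ _ neq_ST.
have /existsP [p] : [exists p, (p \in S) != (p \in T)].
  rewrite -negb_forall; apply: contra neq_ST => /forallP eqST.
  by apply/eqP/setP => p; apply/eqP.
by exists [:: inr p]; rewrite !subset_accepts_test.
Qed.

Lemma subset_nfa_accepts_jump : nfa_lang subset_nfa [:: inl [set ord0]].
Proof. by rewrite nfa_langE /nfa_accepts subset_run_jump F_set1 setIid. Qed.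

End SubsetAutomaton.

Section CycleAutomaton.
Variable m : nat.
Local Notation n := m.+1.

Definition cycle_nfa : nfa unit n := NFA ord0 (fun q _ => [set ordS q]) [set ord0].

Lemma val_iter_ordS k (q : 'I_n) : val (iter k (@ordS n) q) = (q + k) %% n.
Proof.
elim: k => [|k IHk] /=; first by rewrite addn0 modn_small.
by rewrite IHk -addn1 modnDml addn1 addnS.
Qed.

Lemma cycle_run k q : nfa_run cycle_nfa [set q] (nseq k tt) = [set iter k (@ordS n) q].
Proof.
elim: k q => [|k IHk] q //.
by rewrite [nseq _ _]/= nfa_run_cons /nfa_step big_set1 IHk -iterSr.
Qed.

Lemma cycle_run_init (i : 'I_n) : nfa_run cycle_nfa [set ord0] (nseq i tt) = [set i].
Proof.
by rewrite cycle_run; congr [set _]; apply: val_inj; rewrite val_iter_ordS add0n modn_small.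
Qed.

Lemma cycle_accepts_complement (i j : 'I_n) :
  nfa_accepts cycle_nfa [set i] (nseq (n - j) tt) = (i == j).
Proof.
rewrite /nfa_accepts cycle_run setIC /=.
apply/set0Pn/eqP => [[x /setIP [/set1P -> /set1P]] | <-].
  move=> /(congr1 val); rewrite val_iter_ordS /= => eq0; apply: val_inj.
  have ltin := ltn_ord i; have ltjn := ltn_ord j.
  have [lt_ij | lt_ji | //] := ltngtP i j.
    by move: eq0; rewrite modn_small; lia.
  by move: eq0; rewrite (_ : i + (n - j) = i - j + n) ?modnDr ?modn_small; lia.
exists ord0; rewrite !inE eqxx; apply/eqP/val_inj.
by rewrite val_iter_ordS subnKC ?modnn // ltnW.
Qed.

Lemma cycle_nfa_minimal : minimal_nfa cycle_nfa.
Proof.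
apply: (@fooling_set_minimal_nfa _ _ _ (fun i => nseq i tt) (fun i => nseq (n - i) tt)).
  by move=> i; rewrite nfa_langE nfa_accepts_cat cycle_run_init cycle_accepts_complement.
move=> i j; rewrite !nfa_langE nfa_accepts_cat cycle_run_init.
by rewrite cycle_accepts_complement => /eqP.
Qed.

Lemma cycle_nfa_min_dfa_size : min_dfa_size (nfa_lang cycle_nfa) n.
Proof.
have card_set1 : #|[set [set i] | i : 'I_n]| = n.
  by rewrite card_imset ?card_ord //; apply: set1_inj.
rewrite -[X in min_dfa_size _ X]card_set1.
apply: (@subset_automaton_min_dfa_size _ _ _ _ (fun S => nseq (odflt ord0 (unset1 S)) tt)).
- by apply/imsetP; exists ord0.
- by move=> _ /imsetP [i _ ->]; rewrite set1K cycle_run_init.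
- move=> _ [] /imsetP [i _ ->]; rewrite /nfa_step big_set1.
  by apply/imsetP; exists (ordS i).
move=> _ _ /imsetP [i _ ->] /imsetP [j _ ->] neq_ij.
have neq_ji : j != i by apply: contra neq_ij => /eqP ->.
by exists (nseq (n - i) tt); rewrite !cycle_accepts_complement eqxx (negPf neq_ji).
Qed.

Lemma cycle_nfa_accepts_round : nfa_lang cycle_nfa (nseq n tt).
Proof.
by rewrite nfa_langE -[nseq n tt]/(nseq (n - @ord0 m) tt) cycle_accepts_complement.
Qed.

End CycleAutomaton.

Lemma exists_loop_nfa_min_dfa_size n alpha : 0 < n -> n <= alpha <= 2 ^ n ->
  exists (Sigma : finType) (A : nfa Sigma n),
    [/\ minimal_nfa A, n_final A = [set n_init A],
        min_dfa_size (nfa_lang A) alpha & exists2 w, w != [::] & nfa_lang A w].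
Proof.
case: n => [//|m] _ /andP [le_n_alpha le_alpha_2n].
have [-> | neq_alpha_n] := eqVneq alpha m.+1.
  exists unit, (cycle_nfa m); split=> //.
  - exact: cycle_nfa_minimal.
  - exact: cycle_nfa_min_dfa_size.
  - by exists (nseq m.+1 tt); last exact: cycle_nfa_accepts_round.
pose singletons := [set [set i] | i : 'I_m.+1].
have card_singletons : #|singletons| = m.+1.
  by rewrite card_imset ?card_ord //; apply: set1_inj.
have card_nonempty : #|[set~ set0 : {set 'I_m.+1}]| = (2 ^ m.+1).-1.
  by rewrite cardsC1 -cardsT -powersetT card_powerset cardsT card_ord.
have singletons_nonempty : singletons \subset [set~ set0].
  by apply/subsetP => _ /imsetP [i _ ->]; rewrite !inE; apply/set0Pn; exists i; rewrite inE.
have [|F [singletons_F F_nonempty card_F]] :=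
  exists_card_between (k := alpha.-1) singletons_nonempty.
  by rewrite card_singletons card_nonempty; lia.
have F_set1 i : [set i] \in F by apply: subsetP singletons_F _ (imset_f _ _).
have F_set0 : set0 \notin F by apply/negP => /(subsetP F_nonempty); rewrite !inE eqxx.
have card_F0 : #|set0 |: F| = alpha by rewrite cardsU1 F_set0 card_F /=; lia.
exists _, (subset_nfa F); split=> //.
- exact: subset_nfa_minimal.
- by rewrite -card_F0; apply: subset_nfa_min_dfa_size.
- by exists [:: inl [set ord0]]; last exact: subset_nfa_accepts_jump.
Qed.

Theorem mainTheorem3 : forall n alpha : nat, 1 <= n -> n <= alpha <= 2 ^ n ->
  (exists (Sigma : finType) (A : nfa Sigma n),
      minimal_nfa A /\ star_language (nfa_lang A) /\ min_dfa_size (nfa_lang A) alpha) /\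
  (exists (Sigma : finType) (A : nfa Sigma n),
      minimal_nfa A /\ comet_language (nfa_lang A) /\ min_dfa_size (nfa_lang A) alpha) /\
  (exists (Sigma : finType) (A : nfa Sigma n),
      minimal_nfa A /\ two_sided_comet_language (nfa_lang A) /\
      min_dfa_size (nfa_lang A) alpha).
Proof.
move=> n alpha n_pos alpha_range.
have [Sigma [A [A_min A_loop A_dfa [w w_nil A_w]]]] :=
  exists_loop_nfa_min_dfa_size n_pos alpha_range.
have [A_star A_comet A_comet2] := loop_lang_star_comet A_loop w_nil A_w.
by split; [|split]; exists Sigma, A.
Qed.
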